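(* Let $n\geq 1$ and let $\varphi=\frac{1+\sqrt5}{2}$. If ${\bf f}[n]=a$, then $V(n)=\lceil n/\varphi^2\rceil$, equivalently $V(n)$ equals the number of occurrences of $b$ in ${\bf f}(0..n]$ plus one. If ${\bf f}[n]=b$, then $V(n)=\lceil n/\varphi^3\rceil$, equivalently $V(n)$ equals the number of occurrences of the factor $aa$ in ${\bf f}(0..n]$ plus one.
   Context: Fibonacci numbers: $F_0=0$, $F_1=1$, $F_{m+2}=F_{m+1}+F_m$. Standard Fibonacci words over $\{a,b\}$: $f_{-1}=b$, $f_0=a$, $f_{m+1}=f_mf_{m-1}$ for $m\geq 0$ (so $|f_m|=F_{m+2}$). The Fibonacci infinite word is ${\bf f}=\lim_{m\to\infty} f_m=abaababaab\cdots$, indexed from ${\bf f}[1]=a$; ${\bf f}(0..j]$ denotes its prefix of length $j$. For nonnegative integers $k_m,\dots,k_0$, $[k_m\cdots k_0]_F$ denotes $\sum_{i=0}^m k_iF_{i+2}$. A representation $N=[k_m\cdots k_0]_F$ with all $k_i\geq 0$ is valid if ${\bf f}(0..N]=f_m^{k_m}\cdots f_0^{k_0}$. $V(N)$ denotes the number of valid representations of $N$ (up to leading zeros), i.e. the number of factorizations of ${\bf f}(0..N]$ as a concatenation $f_m^{k_m}\cdots f_0^{k_0}$ of standard words $f_i$, $i\geq 0$, in non-strictly decreasing order of index; $V(0)=1$. *)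

From mathcomp Require Import all_boot all_order all_algebra.
From mathcomp Require Import reals.
Import GRing.Theory Num.Theory.

Set Implicit Arguments.
Unset Strict Implicit.
Unset Printing Implicit Defensive.

Definition la : bool := true.
Definition lb : bool := false.

Fixpoint fib (m : nat) : nat :=
  match m with
  | 0 => 0
  | 1 => 1
  | (m'.+1 as k).+1 => fib k + fib m'
  end.

(* sw k = f_{k-1}: sw 0 = f_{-1} = b, sw 1 = f_0 = a,
   sw (k+2) = sw (k+1) ++ sw k, i.e. f_{m+1} = f_m f_{m-1}. *)
Fixpoint sw (k : nat) : seq bool :=
  match k with
  | 0 => [:: lb]
  | 1 => [:: la]
  | (k'.+1 as j).+1 => sw j ++ sw k'
  end.

Definition fw (m : nat) : seq bool := sw m.+1.

(* The Fibonacci infinite word, indexed from 1: f[j] is the j-th letter of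
   any f_m long enough; f_j has length F_{j+2} >= j (for j >= 1), and every
   f_m is a prefix of f_{m+1}, so f[j] = letter j of f_j. *)
Definition fword (j : nat) : bool := nth la (fw j) j.-1.

Definition fprefix (j : nat) : seq bool := take j (fw j).

(* A representation is given little-endian as ks = [:: k_0; k_1; ...; k_m].
   rep_word_from i ks = f_{i+m'}^{k_{i+m'}} ... f_i^{k_i} for ks starting at
   index i. *)
Fixpoint rep_word_from (i : nat) (ks : seq nat) : seq bool :=
  match ks with
  | [::] => [::]
  | k :: ks' => rep_word_from i.+1 ks' ++ flatten (nseq k (fw i))
  end.

Definition rep_word (ks : seq nat) : seq bool := rep_word_from 0 ks.

Definition rep_val (ks : seq nat) : nat :=
  \sum_(i < size ks) nth 0 ks i * fib i.+2.

Definition valid_rep (N : nat) (ks : seq nat) : bool :=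
  (N == rep_val ks) && (fprefix N == rep_word ks).

(* Canonical form "up to leading zeros": the most significant digit k_m is
   nonzero (the empty list represents 0). *)
Definition canon_rep (ks : seq nat) : bool := last 1 ks != 0.

(* V_is N c  <->  V(N) = c : the valid representations of N (up to leading
   zeros) form a finite set of cardinality c. *)
Definition V_is (N : nat) (c : int) : Prop :=
  exists s : seq (seq nat),
    [/\ uniq s,
        forall ks, (ks \in s) = canon_rep ks && valid_rep N ks
      & Posz (size s) = c].

Definition count_b (n : nat) : nat := count (pred1 lb) (fprefix n).

Definition count_aa (n : nat) : nat :=
  count (fun i => (fword i == la) && (fword i.+1 == la)) (iota 1 n.-1).

Local Open Scope ring_scope.

Definition phi (R : realType) : R := (1 + Num.sqrt 5) / 2.

Example fw_chk : fprefix 10 = [:: la; lb; la; la; lb; la; lb; la; la; lb].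
Proof. by []. Qed.

(* Let σ be the morphism a ↦ ab, b ↦ a, so that f_(i+1) = σ(f_i) and f = σ(f).
   The digit sequence k_0 :: t spells σ(word of t) a^(k_0); splitting canonical
   representations according to k_0 = 0 or k_0 > 0 gives, for a nonempty word w,
     r(w) = r(σ⁻¹(w)) + r(w without its final a),
   a term being 0 when the preimage, resp. the final a, does not exist.  Every
   prefix of f is σ(f(0..M]) or σ(f(0..M])a, so strong induction on m yields
     r(f(0..m]a) = #b + 1,   r(f(0..m]b) = #a - #b if f[m] = a, and 0 otherwise,
   where #a, #b count the letters of f(0..m].  The same decomposition shows that
   g(n) = (n+1)/φ² - #b(f(0..n]) satisfies g(|σ(f(0..M])|) = (1 - g(M))(1 - 1/φ²),
   so g stays in (0,1), i.e. #b(f(0..n]) = ⌊(n+1)/φ²⌋; this gives the ceilings,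
   and #aa is tied to #b because every b is surrounded by a's. *)

From mathcomp Require Import all_boot all_order all_algebra.
From mathcomp Require Import reals.
From mathcomp Require Import zify ring lra.
Import GRing.Theory Num.Theory.

Set Implicit Arguments.
Unset Strict Implicit.
Unset Printing Implicit Defensive.

(** * The Fibonacci morphism *)

Definition fibm_letter (c : bool) : seq bool := if c then [:: la; lb] else [:: la].

Definition fibm (w : seq bool) : seq bool := flatten (map fibm_letter w).

Lemma fibm_cons c u : fibm (c :: u) = fibm_letter c ++ fibm u.
Proof. by []. Qed.

Lemma fibm_cat u v : fibm (u ++ v) = fibm u ++ fibm v.
Proof. by rewrite /fibm map_cat flatten_cat. Qed.

Lemma fibm_rcons u c : fibm (rcons u c) = fibm u ++ fibm_letter c.
Proof. by rewrite -cats1 fibm_cat fibm_cons cats0. Qed.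

Lemma size_fibm u : size (fibm u) = size u + count (pred1 la) u.
Proof. by elim: u => //= c u IHu; rewrite size_cat IHu; case: c => /=; lia. Qed.

Lemma count_la_fibm u : count (pred1 la) (fibm u) = size u.
Proof. by elim: u => //= c u IHu; rewrite count_cat IHu; case: c. Qed.

Lemma count_lb_fibm u : count (pred1 lb) (fibm u) = count (pred1 la) u.
Proof. by elim: u => //= c u IHu; rewrite count_cat IHu; case: c. Qed.

Lemma head_fibm u : head la (fibm u) = la.
Proof. by case: u => // -[]. Qed.

Lemma fibm_eq_nil u : (fibm u == [::]) = (u == [::]).
Proof. by case: u => // -[]. Qed.

Lemma fibm_inj : injective fibm.
Proof.
elim=> [|c u IHu] [|d v] //; [by case: d | by case: c | rewrite !fibm_cons].
case: c; case: d => /= -[] //.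
- by move/IHu ->.
- by move=> Euv; have := head_fibm v; rewrite -Euv.
- by move=> Euv; have := head_fibm u; rewrite Euv.
- by move/IHu ->.
Qed.

Lemma fibm_rcons_lb v u : fibm v = rcons u lb ->
  exists2 v', v = rcons v' la & u = rcons (fibm v') la.
Proof.
case/lastP: v => [|v c]; first by case: u.
rewrite fibm_rcons; case: c => /= E; last first.
  by have := congr1 (last la) E; rewrite last_cat last_rcons.
exists v => //.
have : rcons u lb = rcons (rcons (fibm v) la) lb by rewrite -E -!cats1 -catA.
by case/rcons_inj.
Qed.

(** * Prefixes of the Fibonacci word *)

Lemma sw_fibm k : sw k.+1 = fibm (sw k).
Proof.
suff: sw k.+1 = fibm (sw k) /\ sw k.+2 = fibm (sw k.+1) by case.
elim: k => [|k [IH1 IH2]] //; split=> //.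
by rewrite [sw k.+3]/= [sw k.+2]/= fibm_cat -IH1 -IH2.
Qed.

Lemma fw_fibm m : fw m.+1 = fibm (fw m).
Proof. exact: sw_fibm. Qed.

Lemma size_fw m : size (fw m) = fib m.+2.
Proof.
suff: size (sw m.+1) = fib m.+2 /\ size (sw m.+2) = fib m.+3 by case.
elim: m => [|m [IH1 IH2]] //; split=> //.
by rewrite [sw m.+3]/= size_cat IH1 IH2.
Qed.

Lemma ltn_fib m : m < fib m.+2.
Proof.
suff: m < fib m.+2 /\ m.+1 < fib m.+3 by case.
elim: m => [|m [IH1 IH2]] //; split=> //.
by rewrite (_ : fib m.+4 = fib m.+3 + fib m.+2) //; lia.
Qed.

Lemma ltn_size_fw m : m < size (fw m).
Proof. by rewrite size_fw ltn_fib. Qed.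

Lemma fw_take m m' : m <= m' -> take (size (fw m)) (fw m') = fw m.
Proof.
elim: m' => [|m' IHm']; first by rewrite leqn0 => /eqP ->; rewrite take_size.
rewrite leq_eqVlt => /orP[/eqP ->|/IHm' IH]; first by rewrite take_size.
have le_size : size (fw m) <= size (fw m') by rewrite -IH size_take_min geq_minr.
by rewrite [fw m'.+1]/fw [sw _]/= takel_cat.
Qed.

Definition count_a (n : nat) : nat := count (pred1 la) (fprefix n).

Lemma take_fw k m : k <= size (fw m) -> take k (fw m) = fprefix k.
Proof.
move=> le_k; rewrite /fprefix; case: (leqP m k) => [le_mk|lt_km].
- by rewrite -(fw_take le_mk) take_takel.
- rewrite -(fw_take (ltnW lt_km)) take_takel //.
  exact: ltnW (ltn_size_fw k).
Qed.

Lemma size_fprefix n : size (fprefix n) = n.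
Proof. by rewrite /fprefix size_takel // ltnW // ltn_size_fw. Qed.

Lemma take_fprefix k n : k <= n -> take k (fprefix n) = fprefix k.
Proof.
move=> le_kn; rewrite {1}/fprefix take_takel // take_fw //.
by apply: leq_trans le_kn _; apply: ltnW (ltn_size_fw n).
Qed.

Lemma fprefixS n : fprefix n.+1 = rcons (fprefix n) (fword n.+1).
Proof.
have lt_n : n < size (fw n.+1) by apply: ltnW (ltn_size_fw n.+1).
by rewrite {1}/fprefix (take_nth la lt_n) take_fw // ltnW.
Qed.

Lemma fprefix_pred n : 0 < n -> fprefix n = rcons (fprefix n.-1) (fword n).
Proof. by case: n => // n _; rewrite fprefixS. Qed.

Lemma count_a_add_count_b n : count_a n + count_b n = n.
Proof.
rewrite -[RHS](size_fprefix n) -(count_predC (pred1 la)).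
by congr (_ + _); apply: eq_count => -[].
Qed.

Lemma count_aS n : count_a n.+1 = count_a n + (fword n.+1 == la).
Proof. by rewrite /count_a fprefixS -cats1 count_cat /= addn0. Qed.

Lemma count_bS n : count_b n.+1 = count_b n + (fword n.+1 == lb).
Proof. by rewrite /count_b fprefixS -cats1 count_cat /= addn0. Qed.

Lemma count_a_pred n : 0 < n -> count_a n = count_a n.-1 + (fword n == la).
Proof. by case: n => // n _; apply: count_aS. Qed.

Lemma count_b_pred n : 0 < n -> count_b n = count_b n.-1 + (fword n == lb).
Proof. by case: n => // n _; apply: count_bS. Qed.

Lemma fibm_fprefix M :
  fibm (fprefix M) = fprefix (size (fibm (fprefix M))).
Proof.
have E : fw M.+1 = fibm (fprefix M) ++ fibm (drop M (fw M)).
  by rewrite fw_fibm -fibm_cat cat_take_drop.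
have le_size : size (fibm (fprefix M)) <= size (fw M.+1).
  by rewrite E size_cat leq_addr.
by rewrite -(take_fw le_size) E take_size_cat.
Qed.

Lemma fprefix_fibm_decomp m : exists M,
  fprefix m = fibm (fprefix M) \/
  fprefix m = rcons (fibm (fprefix M)) la /\ fword M.+1 = la.
Proof.
elim: m => [|m [M [E|[E xM]]]]; first by exists 0; left.
- have := fibm_fprefix M.+1.
  rewrite fprefixS fibm_rcons -E size_cat size_fprefix.
  case xM: (fword M.+1) => /= EP.
  + exists M; right; split=> //.
    rewrite -E -(take_fprefix (n := m.+2)) // -addn2 -EP take_cat size_fprefix.
    by rewrite ltnNge leqnSn /= subSnn cats1.
  + by exists M.+1; left; rewrite [fprefix M.+1]fprefixS xM fibm_rcons -E EP addn1.
- exists M.+1; left; rewrite [fprefix M.+1]fprefixS xM fibm_rcons.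
  have := fibm_fprefix M.+1; rewrite fprefixS xM fibm_rcons => EP.
  rewrite EP; congr fprefix; rewrite size_cat size_fibm size_fprefix /=.
  have := congr1 size E; rewrite size_fprefix size_rcons size_fibm size_fprefix.
  by move=> ->; rewrite addn2.
Qed.

Lemma fword_lb_prev m : fword m.+1 = lb -> 0 < m /\ fword m = la.
Proof.
move=> xb; have [M [E|[E _]]] := fprefix_fibm_decomp m.+1; rewrite fprefixS xb in E.
- have [v _ Em] := fibm_rcons_lb (esym E).
  have m_gt0 : 0 < m by rewrite -(size_fprefix m) Em size_rcons.
  by split=> //; move: (fprefix_pred m_gt0); rewrite Em => /rcons_inj[_ <-].
- by case/rcons_inj: E.
Qed.

Lemma count_b_le_count_a m : count_b m <= count_a m.
Proof.
have [M [E|[E _]]] := fprefix_fibm_decomp m;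
  rewrite /count_a /count_b E -?cats1 ?count_cat count_lb_fibm count_la_fibm.
- exact: count_size.
- by apply: leq_add; [exact: count_size | ].
Qed.

Lemma count_a_gt0 m : 0 < m -> 0 < count_a m.
Proof. by case: m => // m _; elim: m => // m IHm; rewrite count_aS ltn_addr. Qed.

Lemma count_aaS m :
  count_aa m.+2 = count_aa m.+1 + (fword m.+1 == la) && (fword m.+2 == la).
Proof.
rewrite /count_aa !succnK.
have -> : iota 1 m.+1 = rcons (iota 1 m) m.+1.
  by rewrite -cats1 -[m.+1 in LHS]addn1 iotaD.
by rewrite -cats1 count_cat /= addn0.
Qed.

Lemma count_aa_count_b m :
  count_aa m.+1 + 2 * count_b m.+1 + (fword m.+1 == la) = m.+1.
Proof.
elim: m => [|m] //; rewrite count_aaS (count_bS m.+1) /la /lb.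
case xm2: (fword m.+2); case xm1: (fword m.+1) => /=; try lia.
by have [_] := fword_lb_prev xm2; rewrite xm1.
Qed.

Lemma fprefix_rcons_fword m w c : fprefix m = rcons w c -> fword m = c.
Proof.
move=> E; have m_gt0 : 0 < m by rewrite -(size_fprefix m) E size_rcons.
by move: E; rewrite (fprefix_pred m_gt0) => /rcons_inj[_ ->].
Qed.

Lemma count_aa_lb n : 0 < n -> fword n = lb -> (count_aa n + 2 * count_b n.-1).+2 = n.
Proof.
move=> n_gt0 xn; have := count_aa_count_b n.-1.
by rewrite prednK // (count_b_pred n_gt0) xn /la /lb /=; lia.
Qed.

Lemma fprefix_fibm_counts m M : fprefix m = fibm (fprefix M) ->
  [/\ m = M + count_a M, count_a m = M & count_b m = count_a M].
Proof.
move=> E; rewrite /count_a /count_b E count_la_fibm count_lb_fibm size_fprefix.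
by split=> //; rewrite -[LHS](size_fprefix m) E size_fibm size_fprefix.
Qed.

Lemma fprefix_fibm_la_counts m M : fprefix m = rcons (fibm (fprefix M)) la ->
  [/\ m = (M + count_a M).+1, count_a m = M.+1 & count_b m = count_a M].
Proof.
move=> E; rewrite /count_a /count_b E -cats1 !count_cat count_la_fibm count_lb_fibm.
rewrite size_fprefix /= /la /lb /= !addn0 addn1; split=> //.
by rewrite -[LHS](size_fprefix m) E size_rcons size_fibm size_fprefix.
Qed.

(** * Counting representations *)

Lemma fibm_flatten_nseq k w : fibm (flatten (nseq k w)) = flatten (nseq k (fibm w)).
Proof. by elim: k => //= k IHk; rewrite fibm_cat IHk. Qed.

Lemma rep_word_fromS i ks : rep_word_from i.+1 ks = fibm (rep_word_from i ks).
Proof.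
by elim: ks i => //= k ks IHks i; rewrite IHks fibm_cat fw_fibm fibm_flatten_nseq.
Qed.

Lemma rep_word_cons k t : rep_word (k :: t) = fibm (rep_word t) ++ nseq k la.
Proof.
rewrite /rep_word /= rep_word_fromS; congr (_ ++ _).
by elim: k => //= k ->.
Qed.

Lemma size_rep_word_from i ks :
  size (rep_word_from i ks) = \sum_(j < size ks) nth 0 ks j * fib (i + j).+2.
Proof.
elim: ks i => [|k ks IHks] i; first by rewrite big_ord0.
rewrite /= size_cat IHks size_flatten /shape map_nseq sumn_nseq size_fw.
rewrite big_ord_recl addn0 addnC mulnC; congr (_ + _).
by apply: eq_bigr => j _; rewrite lift0 addSnnS.
Qed.

Lemma size_rep_word ks : size (rep_word ks) = rep_val ks.
Proof. exact: size_rep_word_from. Qed.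

Definition canon_count (p : pred (seq nat)) (c : nat) : Prop :=
  exists s : seq (seq nat),
    [/\ uniq s, forall ks, (ks \in s) = canon_rep ks && p ks & size s = c].

Definition nreps (w : seq bool) (c : nat) : Prop :=
  canon_count (fun ks => rep_word ks == w) c.

Lemma V_is_nreps N c : nreps (fprefix N) c -> V_is N c.
Proof.
case=> s [s_uniq mem_s size_s]; exists s; split=> // [ks|]; last by rewrite size_s.
rewrite mem_s /valid_rep [fprefix N == _]eq_sym; congr (_ && _).
case: eqP => [E|_]; last by rewrite andbF.
by rewrite -size_rep_word E size_fprefix eqxx.
Qed.

Lemma canon_count_eq p q c : p =1 q -> canon_count p c -> canon_count q c.
Proof.
move=> epq [s [s_uniq mem_s size_s]]; exists s; split=> // ks.
by rewrite mem_s epq.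
Qed.

Lemma canon_count0 (p : pred (seq nat)) : p =1 xpred0 -> canon_count p 0.
Proof. by move=> p0; exists [::]; split=> // ks; rewrite p0 andbF. Qed.

Lemma canon_cons k t : canon_rep (k :: t) = if t is [::] then k != 0 else canon_rep t.
Proof. by case: t. Qed.

Definition incr_low (ks : seq nat) : seq nat :=
  if ks is k :: t then k.+1 :: t else [:: 1].

Definition decr_low (ks : seq nat) : seq nat :=
  match ks with [:: 1] => [::] | k.+1 :: t => k :: t | _ => ks end.

Lemma incr_lowK u : canon_rep u -> decr_low (incr_low u) = u.
Proof. by case: u => [|[|k] [|k' t]]. Qed.

Lemma decr_lowK k t : incr_low (decr_low (k.+1 :: t)) = k.+1 :: t.
Proof. by case: k t => [|k] [|k' t]. Qed.

Lemma canon_decr_low k t : canon_rep (decr_low (k.+1 :: t)) = canon_rep (k.+1 :: t).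
Proof. by case: k t => [|k] [|k' t]. Qed.

Lemma canon_count_split p c1 c2 : ~~ p [::] -> ~~ p [:: 0] ->
  canon_count (fun t => p (0 :: t)) c1 ->
  canon_count (fun u => p (incr_low u)) c2 -> canon_count p (c1 + c2).
Proof.
move=> p_nil p_0 [s1 [uniq1 mem1 size1]] [s2 [uniq2 mem2 size2]].
have canon2 u : u \in s2 -> canon_rep u by rewrite mem2 => /andP[].
have incr_inj : {in s2 &, injective incr_low}.
  by move=> u v /canon2/incr_lowK {2}<- /canon2/incr_lowK {2}<- ->.
have cons0_inj : injective (cons 0 : seq nat -> seq nat) by move=> ? ? [].
exists (map (cons 0) s1 ++ map incr_low s2); split.
  rewrite cat_uniq (map_inj_uniq cons0_inj) (map_inj_in_uniq incr_inj).
  rewrite uniq1 uniq2 andbT /=; apply/hasPn => _ /mapP[u _ ->].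
  by apply/mapP => -[v _]; case: u.
- move=> [|[|k] t]; rewrite mem_cat.
  + by rewrite (negbTE p_nil) andbF; apply/norP; split; apply/mapP => -[[|? ?]].
  + have -> : (0 :: t \in map incr_low s2) = false by apply/mapP => -[[|? ?]].
    rewrite orbF (mem_map cons0_inj) mem1 canon_cons.
    by case: t => [|k t] //; rewrite (negbTE p_0) !andbF.
  + have -> : (k.+1 :: t \in map (cons 0) s1) = false by apply/mapP => -[].
    rewrite -canon_decr_low -[in p _]decr_lowK -mem2; apply/mapP/idP.
    * by case=> u u_s2 ->; rewrite incr_lowK // canon2.
    * by move=> decr_s2; exists (decr_low (k.+1 :: t)); rewrite ?decr_lowK.
- by rewrite size_cat !size_map size1 size2.
Qed.

Lemma rep_word_eq_nil ks : canon_rep ks -> (rep_word ks == [::]) = (ks == [::]).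
Proof.
elim: ks => // k t IHt; rewrite canon_cons rep_word_cons -size_eq0 size_cat.
rewrite size_nseq addn_eq0 size_eq0 fibm_eq_nil.
by case: t IHt => [|k' t] IHt; [case: k | move/IHt ->].
Qed.

Lemma nreps_nil : nreps [::] 1.
Proof.
exists [:: [::]]; split=> // ks; rewrite inE.
by apply/idP/andP => [/eqP -> //| [canon_ks]]; rewrite rep_word_eq_nil.
Qed.

Definition nreps_fibm (w : seq bool) (c : nat) : Prop :=
  canon_count (fun ks => fibm (rep_word ks) == w) c.

Lemma nreps_fibm_img v c : nreps v c -> nreps_fibm (fibm v) c.
Proof. by apply: canon_count_eq => ks; rewrite /= (inj_eq fibm_inj). Qed.

Lemma nreps_fibm0 w : (forall v, fibm v != w) -> nreps_fibm w 0.
Proof.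
by move=> notin_img; apply: canon_count0 => ks; rewrite /= (negbTE (notin_img _)).
Qed.

Lemma rep_word_incr_low u : rep_word (incr_low u) = rcons (rep_word u) la.
Proof.
case: u => [|k t] //; rewrite !rep_word_cons rcons_cat -cats1 -[k.+1]addn1.
by rewrite nseqD.
Qed.

Lemma nreps_rcons u c c1 c2 : nreps_fibm (rcons u c) c1 ->
  canon_count (fun v => (rep_word v == u) && (c == la)) c2 ->
  nreps (rcons u c) (c1 + c2).
Proof.
move=> count1 count2; apply: canon_count_split.
- by case: (u).
- by rewrite rep_word_cons; case: (u).
- by apply: canon_count_eq count1 => t; rewrite /= rep_word_cons cats0.
- apply: canon_count_eq count2 => v.
  by rewrite /= rep_word_incr_low eqseq_rcons [la == _]eq_sym.
Qed.

Lemma nreps_rcons_la u c1 c2 :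
  nreps_fibm (rcons u la) c1 -> nreps u c2 -> nreps (rcons u la) (c1 + c2).
Proof.
move=> count1 count2; apply: nreps_rcons count1 _.
by apply: canon_count_eq count2 => v; rewrite /= andbT.
Qed.

Lemma nreps_rcons_lb u c : nreps_fibm (rcons u lb) c -> nreps (rcons u lb) c.
Proof.
move=> count1; rewrite -[c]addn0; apply: nreps_rcons count1 _.
by apply: canon_count0 => v; rewrite /= andbF.
Qed.

Lemma nreps_rcons_lb0 u : (forall v, u != rcons v la) -> nreps (rcons u lb) 0.
Proof.
move=> u_a; apply/nreps_rcons_lb/nreps_fibm0 => v.
by apply/eqP => /fibm_rcons_lb[v' _ Eu]; move: (u_a (fibm v')); rewrite Eu eqxx.
Qed.

Lemma nreps_bb u : nreps (u ++ [:: lb; lb]) 0.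
Proof.
rewrite -[[:: _; _]]/([:: lb] ++ [:: lb]) catA !cats1.
by apply: nreps_rcons_lb0 => v; rewrite eqseq_rcons andbF.
Qed.

(** * Representations of the prefixes *)

(* The number of representations of f(0..m]c; at m = 0 the junk value
   [fword 0] is harmless, both branches being 0. *)
Definition nreps_ext (m : nat) (c : bool) : nat :=
  if c then (count_b m).+1 else if fword m then count_a m - count_b m else 0.

Section ExtensionStep.

Variable m : nat.
Hypothesis IH :
  forall k, k < m -> forall c, nreps (rcons (fprefix k) c) (nreps_ext k c).

Lemma nreps_ext_lb : nreps (rcons (fprefix m) lb) (nreps_ext m lb).
Proof.
have [M [E|[E _]]] := fprefix_fibm_decomp m.
- have [m_def am bm] := fprefix_fibm_counts E.
  case: (posnP M) => [M0|M_gt0].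
    rewrite /nreps_ext am bm M0 if_same E M0.
    by apply: nreps_rcons_lb0 => v; case: v.
  have [AM BM] := (count_a_pred M_gt0, count_b_pred M_gt0).
  have ABM := count_a_add_count_b M.-1.
  move: E; rewrite (fprefix_pred M_gt0) fibm_rcons.
  case xM: (fword M) => E; rewrite /= in E; rewrite xM /la /lb /= in AM BM.
  + rewrite -[[:: la; lb]]/([:: la] ++ [:: lb]) catA cats1 in E.
    rewrite /nreps_ext (fprefix_rcons_fword E).
    have -> : rcons (fprefix m) lb = (fibm (fprefix M.-1) ++ [:: la]) ++ [:: lb; lb].
      by rewrite E -!cats1 -catA.
    exact: nreps_bb.
  + rewrite cats1 in E; have xm := fprefix_rcons_fword E.
    have -> : nreps_ext m lb = nreps_ext M.-1 la.
      by rewrite /nreps_ext xm /la /lb /=; lia.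
    apply: nreps_rcons_lb.
    have -> : rcons (fprefix m) lb = fibm (rcons (fprefix M.-1) la).
      by rewrite E fibm_rcons -!cats1 -catA.
    apply/nreps_fibm_img/IH; lia.
- have [m_def am bm] := fprefix_fibm_la_counts E.
  have -> : nreps_ext m lb = nreps_ext M la.
    rewrite /nreps_ext (fprefix_rcons_fword E) am bm /la /lb /=.
    have := count_a_add_count_b M; lia.
  apply: nreps_rcons_lb.
  have -> : rcons (fprefix m) lb = fibm (rcons (fprefix M) la).
    by rewrite E fibm_rcons -!cats1 -catA.
  apply/nreps_fibm_img/IH; lia.
Qed.

Lemma nreps_ext_la : nreps (rcons (fprefix m) la) (nreps_ext m la).
Proof.
case: (posnP m) => [-> | m_gt0].
  apply: (nreps_rcons_la (c1 := 0)) nreps_nil; apply: (@nreps_fibm_img [:: lb]).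
  by apply: (nreps_rcons_lb0 (u := [::])) => -[].
have c2 : nreps (fprefix m) (nreps_ext m.-1 (fword m)).
  by rewrite (fprefix_pred m_gt0); apply: IH; lia.
have [Am Bm] := (count_a_pred m_gt0, count_b_pred m_gt0).
have [M [E|[E _]]] := fprefix_fibm_decomp m.
- have [m_def am bm] := fprefix_fibm_counts E.
  have M_gt0 : 0 < M.
    by case: M E {m_def am bm} => // E; move: m_gt0; rewrite -(size_fprefix m) E.
  have c1 : nreps_fibm (rcons (fprefix m) la) (nreps_ext M lb).
    have -> : rcons (fprefix m) la = fibm (rcons (fprefix M) lb).
      by rewrite E fibm_rcons cats1.
    apply/nreps_fibm_img/IH.
    by have := count_a_gt0 M_gt0; lia.
  apply: eq_ind (nreps_rcons_la c1 c2) _ _.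
  have [AM BM] := (count_a_pred M_gt0, count_b_pred M_gt0).
  have ABM := count_a_add_count_b M.
  move: E; rewrite (fprefix_pred M_gt0) fibm_rcons /nreps_ext.
  case xM: (fword M) => /= E; rewrite xM /la /lb /= in AM BM *.
  + rewrite -[[:: la; lb]]/([:: la] ++ [:: lb]) catA cats1 in E.
    have xm := fprefix_rcons_fword E.
    have [_ xm1] : 0 < m.-1 /\ fword m.-1 = la by apply: fword_lb_prev; rewrite prednK.
    have := count_b_le_count_a M.
    by rewrite xm xm1 /la /= in Am Bm *; lia.
  + rewrite cats1 in E; rewrite (fprefix_rcons_fword E) /la /= in Am Bm *; lia.
- have [m_def am bm] := fprefix_fibm_la_counts E.
  have c1 : nreps_fibm (rcons (fprefix m) la) 0.
    have -> : rcons (fprefix m) la = fibm (fprefix M ++ [:: lb; lb]).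
      by rewrite E fibm_cat -!cats1 -catA.
    exact/nreps_fibm_img/nreps_bb.
  apply: eq_ind (nreps_rcons_la c1 c2) _ _.
  by rewrite /nreps_ext (fprefix_rcons_fword E) /la /= in Am Bm *; lia.
Qed.

End ExtensionStep.

Lemma nreps_fprefix_rcons m c : nreps (rcons (fprefix m) c) (nreps_ext m c).
Proof.
by elim/ltn_ind: m c => m IH [|]; [apply: nreps_ext_la | apply: nreps_ext_lb].
Qed.

Lemma V_is_count_b n : (0 < n)%N -> fword n = la -> V_is n (count_b n).+1.
Proof.
move=> n_gt0 xn; apply: V_is_nreps.
rewrite (fprefix_pred n_gt0) (count_b_pred n_gt0) xn /la /lb /= addn0.
exact: nreps_fprefix_rcons.
Qed.

Lemma V_is_count_aa n : (0 < n)%N -> fword n = lb -> V_is n (count_aa n).+1.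
Proof.
move=> n_gt0 xn; have [_ xn1] : (0 < n.-1)%N /\ fword n.-1 = la.
  by apply: fword_lb_prev; rewrite prednK.
have AAn := count_aa_lb n_gt0 xn.
have ABn := count_a_add_count_b n.-1.
apply: V_is_nreps; rewrite (fprefix_pred n_gt0) xn.
have -> : (count_aa n).+1 = nreps_ext n.-1 lb by rewrite /nreps_ext xn1 /la /=; lia.
exact: nreps_fprefix_rcons.
Qed.

Local Open Scope ring_scope.

(** * Letter frequencies and the golden ratio *)

Section CountBFrac.

Variables (R : realFieldType) (t : R).
Hypothesis t_sqr : t ^+ 2 = 3 * t - 1.
Hypotheses (t_gt0 : 0 < t) (t_lt1 : t < 1).

Definition count_b_frac (n : nat) : R := n.+1%:R * t - (count_b n)%:R.

Lemma count_b_frac_pred n : (0 < n)%N ->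
  count_b_frac n = count_b_frac n.-1 + t - (fword n == lb)%:R.
Proof.
move=> n_gt0; rewrite /count_b_frac (count_b_pred n_gt0) prednK // natrD -natr1.
by ring.
Qed.

Lemma count_b_frac_fibm m M : fprefix m = fibm (fprefix M) ->
  count_b_frac m = (1 - count_b_frac M) * (1 - t).
Proof.
move=> /fprefix_fibm_counts[m_def _ bm].
have ab : M%:R = (count_a M)%:R + (count_b M)%:R :> R.
  by rewrite -natrD count_a_add_count_b.
rewrite /count_b_frac bm m_def -!natr1 !natrD ab.
apply/eqP; rewrite -subr_eq0; apply/eqP.
transitivity (- (((count_a M)%:R + (count_b M)%:R + 1) * (t ^+ 2 - (3 * t - 1)))).
  by ring.
by rewrite t_sqr subrr mulr0 oppr0.
Qed.

Lemma count_b_frac_bounds n : 0 < count_b_frac n < 1.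
Proof.
have t1_gt0 : 0 < 1 - t by rewrite subr_gt0.
elim/ltn_ind: n => n IH; have [M [E|[E _]]] := fprefix_fibm_decomp n.
- case: (posnP M) => [M0|M_gt0].
    have -> : n = 0%N by rewrite -(size_fprefix n) E M0.
    by rewrite /count_b_frac mul1r subr0 t_gt0 t_lt1.
  have /andP[gM_gt0 gM_lt1] : 0 < count_b_frac M < 1.
    apply: IH; have [-> _ _] := fprefix_fibm_counts E.
    by have := count_a_gt0 M_gt0; lia.
  have gM1_gt0 : 0 < 1 - count_b_frac M by rewrite subr_gt0.
  rewrite (count_b_frac_fibm E) mulr_gt0 //=.
  by have := mulr_gt0 t_gt0 gM1_gt0; lra.
- have [n_def _ _] := fprefix_fibm_la_counts E.
  have n_gt0 : (0 < n)%N by rewrite n_def.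
  have /andP[gM_gt0 gM_lt1] : 0 < count_b_frac M < 1 by apply: IH; lia.
  move: E; rewrite (fprefix_pred n_gt0) => /rcons_inj[E xn].
  rewrite (count_b_frac_pred n_gt0) (count_b_frac_fibm E) xn /la /lb /= mulr0n subr0.
  rewrite addr_gt0 ?mulr_gt0 ?subr_gt0 //=.
  by have := mulr_gt0 gM_gt0 t1_gt0; lra.
Qed.

End CountBFrac.

Lemma ceil_nat (R : archiNumDomainType) (y : R) (k : nat) :
  k%:R - 1 < y <= k%:R -> Num.ceil y = k.
Proof. by move=> yk; apply: ceil_def; rewrite rmorphB /= rmorph1. Qed.

Section GoldenRatio.

Variable R : realType.

Lemma phi_sqr : phi R ^+ 2 = phi R + 1.
Proof.
have s5 : Num.sqrt 5 ^+ 2 = 5 :> R by rewrite sqr_sqrtr // ler0n.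
rewrite /phi; apply/eqP; rewrite -subr_eq0; apply/eqP.
transitivity ((Num.sqrt 5 ^+ 2 - 5) / 4 : R); first by field.
by rewrite s5 subrr mul0r.
Qed.

Lemma phi_bounds : 3 / 2 < phi R < 2.
Proof.
have s5 : Num.sqrt 5 ^+ 2 = 5 :> R by rewrite sqr_sqrtr // ler0n.
have s_ge0 := sqrtr_ge0 (5 : R).
by rewrite /phi; apply/andP; split; nra.
Qed.

Lemma phi_sqr_inv : (phi R ^+ 2)^-1 = 2 - phi R.
Proof.
apply: mulr1_eq; rewrite phi_sqr.
by transitivity (2 + phi R - phi R ^+ 2); [ring | rewrite phi_sqr; ring].
Qed.

Lemma phi_cube_inv : (phi R ^+ 3)^-1 = 2 * phi R - 3.
Proof.
have phi_cube : phi R ^+ 3 = 2 * phi R + 1.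
  by rewrite exprS phi_sqr mulrDr -expr2 phi_sqr; ring.
apply: mulr1_eq; rewrite phi_cube.
by transitivity (4 * phi R ^+ 2 - 4 * phi R - 3); [ring | rewrite phi_sqr; ring].
Qed.

Lemma count_b_frac_golden n : 0 < count_b_frac (2 - phi R) n < 1.
Proof.
have /andP[phi_gt phi_lt] := phi_bounds.
by apply: count_b_frac_bounds; [rewrite sqrrB phi_sqr; ring | lra | lra].
Qed.

Lemma ceil_count_b n : (0 < n)%N -> fword n = la ->
  Num.ceil (n%:R * (2 - phi R)) = (count_b n).+1.
Proof.
move=> n_gt0 xn; have /andP[] := count_b_frac_golden n.-1.
rewrite /count_b_frac prednK // (count_b_pred n_gt0) xn /la /lb /= addn0 => lo hi.
by apply: ceil_nat; rewrite -natr1; apply/andP; split; lra.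
Qed.

(* As f[n] = b, [count_b_frac n > 0] forces [count_b_frac n.-1 > 1 - t > 1/2]. *)
Lemma ceil_count_aa n : (0 < n)%N -> fword n = lb ->
  Num.ceil (n%:R * (2 * phi R - 3)) = (count_aa n).+1.
Proof.
move=> n_gt0 xn; have /andP[phi_gt _] := phi_bounds.
have /andP[gn_gt0 _] := count_b_frac_golden n.
have /andP[_ g_lt1] := count_b_frac_golden n.-1.
rewrite (count_b_frac_pred _ n_gt0) xn eqxx mulr1n in gn_gt0.
rewrite /count_b_frac prednK // in gn_gt0 g_lt1.
have AAR : ((count_aa n).+1 + 2 * count_b n.-1 + 1)%:R = n%:R :> R.
  by congr (_%:R); have := count_aa_lb n_gt0 xn; lia.
rewrite !natrD in AAR.
by apply: ceil_nat; apply/andP; split; lra.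
Qed.

End GoldenRatio.

Theorem theorem1 (R : realType) (n : nat) :
  (1 <= n)%N ->
  (fword n = la ->
     V_is n (Num.ceil (n%:R / phi R ^+ 2)) /\ V_is n (Posz (count_b n).+1)) /\
  (fword n = lb ->
     V_is n (Num.ceil (n%:R / phi R ^+ 3)) /\ V_is n (Posz (count_aa n).+1)).
Proof.
move=> n_gt0; rewrite phi_sqr_inv phi_cube_inv; split=> xn.
  by rewrite ceil_count_b //; split; apply: V_is_count_b.
by rewrite ceil_count_aa //; split; apply: V_is_count_aa.
Qed.
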